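(* Let $(I_t)_{t\in\mathbb{Z}}$ be a stochastic process such that there exists a family $(I_t^n)_{t\in\mathbb{Z}}$, $n\in\mathbb{N}$, of $\{0,1\}$-valued stationary stochastic processes with $P(I_0^n=1)>0$ for all $n\in\mathbb{N}$ and $$\mathcal{L}\bigl((I_t^n)_{t\in\{-u,\dots,v\}}\mid I_0^n=1\bigr)\Longrightarrow \mathcal{L}\bigl((I_t)_{t\in\{-u,\dots,v\}}\bigr)\quad (n\to\infty)$$ (weak convergence) for all $u,v\in\mathbb{N}$. Let $A\subset\mathbb{Z}$ with $0\in A$. Then $$P(I_t=1,\ t\in A)=P(I_{t-a}=1,\ t\in A)\quad\text{for all } a\in A.$$
   Context: $\mathcal{L}(\cdot\mid\cdot)$ denotes conditional law and $\Longrightarrow$ convergence in distribution. $\mathbb{N}=\{1,2,\dots\}$. *)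

From HB Require Import structures.
From mathcomp Require Import all_boot all_order all_algebra.
From mathcomp Require Import all_classical all_reals all_analysis.
Set Implicit Arguments. Unset Strict Implicit. Unset Printing Implicit Defensive.
Import Order.TTheory GRing.Theory Num.Theory.
Import numFieldNormedType.Exports.
Local Open Scope classical_set_scope.
Local Open Scope ring_scope.

Definition is_process d (T : measurableType d) (R : realType)
  (X : int -> T -> R) : Prop :=
  forall t, measurable_fun setT (X t).

(* Strict stationarity: all finite-dimensional distributions are shift
   invariant (stated on measurable rectangles, which generate the product
   sigma-algebra). *)
Definition stationary d (T : measurableType d) (R : realType)
  (P : probability T R) (X : int -> T -> R) : Prop :=
  forall (s : int) (ts : seq int) (B : int -> set R),
    (forall t, measurable (B t)) ->
    P (\bigcap_(t in [set` ts]) (X (t + s)%R @^-1` B t)) =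
    P (\bigcap_(t in [set` ts]) (X t @^-1` B t)).

Definition window d (T : measurableType d) (R : realType)
  (X : int -> T -> R) (u v : nat) (w : T) : 'rV[R]_(u + v).+1 :=
  \row_(i < (u + v).+1) X (i%:Z - u%:Z)%R w.

Definition bounded_continuous (R : realType) (k : nat)
  (f : 'rV[R]_k -> R) : Prop :=
  continuous f /\ exists M : R, forall x, `|f x| <= M.

Definition cond_expect d (T : measurableType d) (R : realType)
  (P : probability T R) (B : set T) (g : T -> R) : R :=
  Rintegral P B g / fine (P B).

(* Conditionally on [I^n_0 = 1], the probability that [I^n] equals 1 on a finite
   set [s] containing [0] is [P(I^n = 1 on s) / P(I^n_0 = 1)].  If also [a \in s],
   stationarity of [I^n] leaves this ratio unchanged when [s] is replaced by
   [s - a], which again contains [0].  The ratio is the conditional expectation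
   of the bounded continuous window functional [x |-> prod_(t in s) clamp01 x_t],
   so letting [n] tend to infinity gives [P(I = 1 on s) = P(I = 1 on s - a)];
   this last step needs [I] to be a.s. {0,1}-valued, which follows from the same
   limit applied to [min(1, |x_t (x_t - 1)|)].  Continuity of [P] from above
   along finite truncations of [A] then gives the identity for arbitrary [A]. *)

From mathcomp Require Import all_boot all_order all_algebra.
From mathcomp Require Import all_classical all_reals all_analysis.
From mathcomp Require Import zify.
Set Implicit Arguments. Unset Strict Implicit. Unset Printing Implicit Defensive.
Import Order.TTheory GRing.Theory Num.Theory.
Import numFieldNormedType.Exports.
Local Open Scope classical_set_scope.
Local Open Scope ring_scope.

Section ZeroOneFunctions.
Variable R : realType.

Definition clamp01 (y : R) : R := Num.min 1 (Num.max 0 y).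

Lemma clamp01_continuous : continuous clamp01.
Proof.
have -> : clamp01 = cst 1 \min (cst 0 \max id) by [].
apply: min_fun_continuous; first exact: cst_continuous.
by apply: max_fun_continuous; [exact: cst_continuous | move=> x; exact: cvg_id].
Qed.

Lemma clamp01_ge0 y : 0 <= clamp01 y.
Proof. by rewrite /clamp01 le_min ler01 le_max lexx. Qed.

Lemma clamp01_le1 y : clamp01 y <= 1.
Proof. by rewrite /clamp01 ge_min lexx. Qed.

Lemma clamp01_id y : 0 <= y <= 1 -> clamp01 y = y.
Proof. by case/andP=> y0 y1; rewrite /clamp01 (max_idPr y0) (min_idPr y1). Qed.

Lemma prod_clamp01_ge0 (h : int -> R) s : 0 <= \prod_(t <- s) clamp01 (h t).
Proof. by apply: prodr_ge0 => t _; exact: clamp01_ge0. Qed.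

Lemma prod_clamp01_le1 (h : int -> R) s : \prod_(t <- s) clamp01 (h t) <= 1.
Proof.
elim: s => [|t s IH]; rewrite ?big_nil ?big_cons //.
by apply: mulr_ile1; rewrite ?clamp01_ge0 ?clamp01_le1 ?prod_clamp01_ge0.
Qed.

Definition defect01 (y : R) : R := Num.min 1 `|y * (y - 1)|.

Lemma defect01_continuous : continuous defect01.
Proof.
have -> : defect01 = cst 1 \min (fun y => `|y * (y - 1)|) by [].
apply: min_fun_continuous; first exact: cst_continuous.
have poly_cont : continuous (fun y : R => y * (y - 1)).
  by move=> y; apply: cvgM; [exact: cvg_id | apply: cvgB; [exact: cvg_id | exact: cvg_cst]].
by move=> y; apply: (continuous_comp (poly_cont y)); exact: norm_continuous.
Qed.

Lemma defect01_ge0 y : 0 <= defect01 y.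
Proof. by rewrite /defect01 le_min ler01 normr_ge0. Qed.

Lemma defect01_le1 y : defect01 y <= 1.
Proof. by rewrite /defect01 ge_min lexx. Qed.

Lemma defect01_eq0 y : defect01 y = 0 <-> y = 0 \/ y = 1.
Proof.
rewrite /defect01; split.
  case: (lerP 1 `|y * (y - 1)|) => [_ /eqP|_ /normr0_eq0/eqP].
    by rewrite oner_eq0.
  by rewrite mulf_eq0 subr_eq0 => /orP[] /eqP ->; [left|right].
by case=> ->; rewrite ?mul0r ?subrr ?mulr0 normr0; apply/min_idPr; exact: ler01.
Qed.

End ZeroOneFunctions.

Arguments clamp01 {R} y.
Arguments defect01 {R} y.

Section WindowTests.
Variables (R : realType) (u v : nat).

Definition window_range : pred int := fun t => (- u%:Z <= t <= v%:Z)%R.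

(* [inord] returns [ord0] for times outside [window_range]. *)
Definition window_idx (t : int) : 'I_(u + v).+1 := inord (absz (t + u%:Z)).

Lemma window_idxE d (T : measurableType d) (X : int -> T -> R) t w :
  t \in window_range -> window X u v w ord0 (window_idx t) = X t w.
Proof.
case/andP=> tu tv; have tu0 : (0 <= t + u%:Z)%R by rewrite -lerBlDr sub0r.
rewrite /window mxE /window_idx inordK; first by rewrite gez0_abs ?addrK.
by rewrite ltnS -lez_nat gez0_abs // PoszD [t + _]addrC lerD2l.
Qed.

Definition coord_test (g : R -> R) (t : int) (x : 'rV[R]_(u + v).+1) : R :=
  g (x ord0 (window_idx t)).

Lemma coord_test_window g t d (T : measurableType d) (X : int -> T -> R) w :
  t \in window_range -> coord_test g t (window X u v w) = g (X t w).
Proof. by move=> t_win; rewrite /coord_test window_idxE. Qed.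

Lemma coord_test_continuous g t : continuous g -> continuous (coord_test g t).
Proof.
move=> g_cont x.
apply: (@continuous_comp _ _ _ (fun M : 'rV[R]_(u + v).+1 => M ord0 (window_idx t))).
  exact: coord_continuous.
exact: g_cont.
Qed.

Definition ones_test (s : seq int) (x : 'rV[R]_(u + v).+1) : R :=
  \prod_(t <- s) coord_test clamp01 t x.

Lemma ones_test_bounded_continuous s : bounded_continuous (ones_test s).
Proof.
split.
  elim: s => [|t s IH] x; rewrite /ones_test.
    under eq_fun do rewrite big_nil.
    exact: cst_continuous.
  under eq_fun do rewrite big_cons.
  apply: continuousM; last exact: IH.
  exact/coord_test_continuous/clamp01_continuous.
exists 1 => x.
by rewrite /ones_test ger0_norm ?prod_clamp01_ge0 ?prod_clamp01_le1.
Qed.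

Lemma defect_test_bounded_continuous t :
  bounded_continuous (coord_test defect01 t).
Proof.
split; first exact/coord_test_continuous/defect01_continuous.
by exists 1 => x; rewrite /coord_test ger0_norm ?defect01_ge0 ?defect01_le1.
Qed.

End WindowTests.

Arguments coord_test {R} u v g t x.
Arguments ones_test {R} u v s x.

Lemma window_range_absz m t : (absz t < m)%N -> t \in window_range m m.
Proof. by move=> tm; apply/andP; split; lia. Qed.

Section ProcessEvents.
Variables (d : measure_display) (T : measurableType d) (R : realType).
Implicit Types (X : int -> T -> R) (s : seq int).

Definition ones_event X s : set T := \bigcap_(t in [set` s]) (X t @^-1` [set 1]).

Lemma preimage1_measurable X t : is_process X -> measurable (X t @^-1` [set 1]).
Proof. by move=> mX; rewrite -[_ @^-1` _]setTI; apply: mX => //; exact: measurable_set1. Qed.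

Lemma ones_event_measurable X s : is_process X -> measurable (ones_event X s).
Proof.
move=> mX; apply: fin_bigcap_measurable; first exact: finite_seq.
by move=> t _; exact: preimage1_measurable.
Qed.

Lemma ones_event_shift X (a : int) s :
  ones_event (fun t => X (t - a)) s = ones_event X [seq t - a | t <- s].
Proof.
apply/seteqP; split => w /= h t; first by case/mapP=> t' t's ->; exact: h.
by move=> ts; apply: h; apply/mapP; exists t.
Qed.

Lemma stationary_ones_event (Q : probability T R) X (a : int) s :
  stationary Q X -> Q (ones_event X [seq t - a | t <- s]) = Q (ones_event X s).
Proof.
by move=> statX; rewrite -ones_event_shift; exact: (statX (- a) s (fun=> [set 1])).
Qed.

Lemma prod_clamp01_indic X s w : (forall t, X t w = 0 \/ X t w = 1) ->
  \prod_(t <- s) clamp01 (X t w) = \1_(ones_event X s) w.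
Proof.
move=> X01; have clampX t : clamp01 (X t w) = X t w.
  by apply: clamp01_id; case: (X01 t) => ->; rewrite lexx ler01.
under eq_bigr do rewrite clampX.
rewrite indicE; have [/set_mem wE|wE] := boolP (w \in ones_event X s).
  by rewrite big1_seq // => t /andP[_ ts]; exact: wE.
apply/eqP; rewrite prodf_seq_eq0; apply: contraNT wE => /hasPn Xs.
apply/mem_set => t /= ts; case: (X01 t) => // Xt0.
by move: (Xs t ts); rewrite Xt0 eqxx.
Qed.

Lemma Rintegral_ones_test (Q : probability T R) X (u v : nat) s (D : set T) :
  is_process X -> measurable D -> {subset s <= window_range u v} ->
  (\forall w \ae Q, forall t, X t w = 0 \/ X t w = 1) ->
  Rintegral Q D (ones_test u v s \o window X u v) = fine (Q (ones_event X s `&` D)).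
Proof.
move=> mX mD s_win X01.
have -> : ones_test u v s \o window X u v = fun w => \prod_(t <- s) clamp01 (X t w).
  by apply/funext => w; apply: eq_big_seq => t ts; rewrite coord_test_window ?s_win.
have mprod : measurable_fun setT (fun w => \prod_(t <- s) clamp01 (X t w)).
  apply: measurable_prod => t _; apply: measurableT_comp (mX t).
  exact: measurable_realfun.continuous_measurable_fun (@clamp01_continuous R).
rewrite /Rintegral -(integral_indic Q mD (ones_event_measurable s mX)); congr fine.
apply: ae_eq_integral => //.
- exact/measurable_realfun.measurable_EFinP/(measurable_funS measurableT).
- apply/measurable_realfun.measurable_EFinP.
  exact/measurable_realfun.measurable_indic/ones_event_measurable.
- by apply: filterS X01 => w X01w _; rewrite prod_clamp01_indic.
Qed.

Lemma cond_expect_ones_test (Q : probability T R) X (u v : nat) s :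
  is_process X -> (forall t w, X t w = 0 \/ X t w = 1) ->
  0 \in s -> {subset s <= window_range u v} ->
  cond_expect Q [set w | X 0 w = 1] (ones_test u v s \o window X u v) =
  fine (Q (ones_event X s)) / fine (Q [set w | X 0 w = 1]).
Proof.
move=> mX X01 s0 s_win; rewrite /cond_expect.
rewrite (Rintegral_ones_test mX (preimage1_measurable 0 mX) s_win); last exact: aeW.
by rewrite setIidl // => w /(_ 0 s0).
Qed.

Lemma ge0_Rintegral_eq0_ae (Q : probability T R) (f : T -> R) :
  measurable_fun setT f -> (forall x, 0 <= f x <= 1) ->
  Rintegral Q setT f = 0 -> \forall x \ae Q, f x = 0.
Proof.
move=> mf f01 intf0.
have f_ge0 x : (0 <= (f x)%:E)%E by rewrite lee_fin; case/andP: (f01 x).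
have mEf := (measurable_realfun.measurable_EFinP _ _).2 mf.
have int_le1 : (\int[Q]_x (f x)%:E <= 1)%E.
  apply: (@le_trans _ _ (\int[Q]_x (cst 1%:E x))%E).
    apply: ge0_le_integral => //.
    by move=> x _; rewrite lee_fin; case/andP: (f01 x).
  by rewrite integral_cst // mul1e; exact: probability_le1.
have int0 : (\int[Q]_x (f x)%:E = 0)%E.
  have fin : (\int[Q]_x (f x)%:E)%E \is a fin_num.
    by rewrite ge0_fin_numE ?integral_ge0 // (le_lt_trans int_le1) ?ltry.
  by rewrite -(fineK fin); congr EFin.
have /(ae_eq_integral_abs Q measurableT mEf) : (\int[Q]_x `|(f x)%:E| = 0)%E.
  by rewrite -int0; apply: eq_integral => x _; rewrite gee0_abs.
by apply: filterS => x /(_ I) [].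
Qed.

Lemma ae_forall_int (Q : probability T R) (p : int -> T -> Prop) :
  (forall t, \forall x \ae Q, p t x) -> \forall x \ae Q, forall t, p t x.
Proof.
move=> pt; have := ae_foralln (fun n => pt (Posz n)).
have := ae_foralln (fun n => pt (Negz n)).
by apply: filterS2 => x pN pP [] n; [exact: pP | exact: pN].
Qed.

End ProcessEvents.

Definition int_range (N : nat) : seq int := [seq k%:Z - N%:Z | k <- iota 0 (N + N).+1].

Lemma mem_int_range N t : (t \in int_range N) = (absz t <= N)%N.
Proof.
apply/mapP/idP => [[k] | tN]; first by rewrite mem_iota => /andP[_ kN] ->; lia.
by exists (absz (t + N%:Z)); [rewrite mem_iota; lia | lia].
Qed.

Section FiniteApproximation.
Variables (d : measure_display) (T : measurableType d) (R : realType).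
Variables (P : probability T R) (A : set int) (s0 : seq int).
Hypothesis s0A : {subset s0 <= A}.

Definition trunc_in (N : nat) : seq int := s0 ++ [seq t <- int_range N | t \in A].

Lemma trunc_in_sub N : {subset trunc_in N <= A}.
Proof. by move=> t; rewrite mem_cat mem_filter => /orP[/s0A | /andP[]]. Qed.

Lemma trunc_inS N M : (N <= M)%N -> {subset trunc_in N <= trunc_in M}.
Proof.
move=> NM t; rewrite !mem_cat !mem_filter !mem_int_range.
by case/orP=> [-> // | /andP[-> tN]]; rewrite (leq_trans tN NM) orbT.
Qed.

Lemma cvg_bigcap_trunc_in (G : int -> set T) : (forall t, measurable (G t)) ->
  P (\bigcap_(t in [set` trunc_in N]) G t) @[N --> \oo] -->
  P (\bigcap_(t in A) G t).
Proof.
move=> mG; have mtrunc N : measurable (\bigcap_(t in [set` trunc_in N]) G t).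
  by apply: fin_bigcap_measurable; [exact: finite_seq | move=> t _; exact: mG].
have -> : \bigcap_(t in A) G t = \bigcap_N \bigcap_(t in [set` trunc_in N]) G t.
  apply/seteqP; split => w /= GAw; last first.
    by move=> t At; apply: (GAw (absz t) I t); rewrite /= mem_cat mem_filter
      mem_int_range leqnn (mem_set At) orbT.
  by move=> N _ t /trunc_in_sub/set_mem; exact: GAw.
apply: nonincreasing_cvg_mu => //.
- by rewrite (le_lt_trans (probability_le1 P (mtrunc 0%N))) ?ltry.
- exact: bigcapT_measurable.
- by move=> N M NM; rewrite subsetEset => w GNw t /(trunc_inS NM); exact: GNw.
Qed.

Lemma probability_bigcap_eq (E F : int -> set T) :
  (forall t, measurable (E t)) -> (forall t, measurable (F t)) ->
  (forall s : seq int, {subset s0 <= s} -> {subset s <= A} ->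
     P (\bigcap_(t in [set` s]) E t) = P (\bigcap_(t in [set` s]) F t)) ->
  P (\bigcap_(t in A) E t) = P (\bigcap_(t in A) F t).
Proof.
move=> mE mF EF_fin.
have EF N : P (\bigcap_(t in [set` trunc_in N]) E t) =
            P (\bigcap_(t in [set` trunc_in N]) F t).
  by apply: EF_fin (@trunc_in_sub N) => t ts; rewrite mem_cat ts.
rewrite -(cvg_lim (@ereal_hausdorff R) (cvg_bigcap_trunc_in mE)).
by rewrite -(cvg_lim (@ereal_hausdorff R) (cvg_bigcap_trunc_in mF)) (funext EF).
Qed.

End FiniteApproximation.

Section ConditionedLimit.
(* Keeps [n] explicit in [Pn n], [In n] and in the hypotheses below. *)
Unset Implicit Arguments.
Variables (R : realType) (d : measure_display) (T : measurableType d).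
Variables (P : probability T R) (I : int -> T -> R).
Variables (dn : nat -> measure_display) (Tn : forall n, measurableType (dn n)).
Variables (Pn : forall n, probability (Tn n) R) (In : forall n, int -> Tn n -> R).
Hypothesis mI : is_process I.
Hypothesis mIn : forall n, is_process (In n).
Hypothesis In01 : forall n t w, In n t w = 0 \/ In n t w = 1.
Hypothesis In_stationary : forall n, stationary (Pn n) (In n).
Hypothesis cvg_window : forall u v : nat, (0 < u)%N -> (0 < v)%N ->
  forall f : 'rV[R]_(u + v).+1 -> R, bounded_continuous f ->
  (fun n => cond_expect (Pn n) [set w | In n 0 w = 1] (f \o window (In n) u v)) @ \oo
    --> Rintegral P setT (f \o window I u v).
Set Implicit Arguments.

Lemma I_ae01 : \forall w \ae P, forall t, I t w = 0 \/ I t w = 1.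
Proof.
apply: ae_forall_int => t; pose m := (absz t).+1.
have t_win : t \in window_range m m by exact: window_range_absz.
have := cvg_window m m (ltn0Sn _) (ltn0Sn _) _ (defect_test_bounded_continuous R m m t).
rewrite (eq_Rintegral P (g := defect01 \o I t)) => [|w _]; last exact: coord_test_window.
under eq_fun => n.
  rewrite /cond_expect /Rintegral integral0_eq => [|w _]; last first.
    by rewrite /= coord_test_window //; congr EFin; apply/defect01_eq0.
  rewrite mul0r; over.
move/(cvg_lim (@Rhausdorff R)); rewrite lim_cst // => defect0.
apply: filterS (ge0_Rintegral_eq0_ae _ _ (esym defect0)) => [w /defect01_eq0 //| |].
- exact: measurableT_comp (measurable_realfun.continuous_measurable_fun
    (@defect01_continuous R)) (mI t).
- by move=> w; rewrite defect01_ge0 defect01_le1.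
Qed.

Lemma cvg_ones_ratio m (s : seq int) : 0 \in s -> {subset s <= window_range m.+1 m.+1} ->
  (fun n => fine (Pn n (ones_event (In n) s)) / fine (Pn n [set w | In n 0 w = 1])) @ \oo
    --> fine (P (ones_event I s)).
Proof.
move=> s0 s_win.
have := cvg_window m.+1 m.+1 (ltn0Sn m) (ltn0Sn m) _ (ones_test_bounded_continuous R m.+1 m.+1 s).
rewrite (Rintegral_ones_test mI measurableT s_win I_ae01) setIT.
by under eq_fun do rewrite cond_expect_ones_test //.
Qed.

Lemma probability_ones_event_shift (s : seq int) (a : int) : 0 \in s -> a \in s ->
  P (ones_event I [seq t - a | t <- s]) = P (ones_event I s).
Proof.
move=> s0 sa; set s' := [seq t - a | t <- s].
pose m := \max_(t <- s ++ s') absz t.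
have win (r : seq int) : {subset r <= s ++ s'} -> {subset r <= window_range m.+1 m.+1}.
  move=> rs t /rs ts; apply: window_range_absz; rewrite ltnS.
  exact: leq_bigmax_seq.
have s'0 : 0 \in s' by apply/mapP; exists a => //; rewrite subrr.
have ss : {subset s <= s ++ s'} by move=> t ts; rewrite mem_cat ts.
have ss' : {subset s' <= s ++ s'} by move=> t ts; rewrite mem_cat ts orbT.
have := cvg_ones_ratio s'0 (win s' ss').
under eq_fun do rewrite stationary_ones_event //.
move/(cvg_lim (@Rhausdorff R)).
rewrite (cvg_lim (@Rhausdorff R) (cvg_ones_ratio s0 (win s ss))) => fine_eq.
have fin r : P (ones_event I r) \is a fin_num by exact/fin_num_measure/ones_event_measurable.
by rewrite -(fineK (fin s')) -(fineK (fin s)) fine_eq.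
Qed.
End ConditionedLimit.

Unset Implicit Arguments.

Theorem theorem2p1 (R : realType)
  (d : measure_display) (T : measurableType d) (P : probability T R)
  (I : int -> T -> R)
  (dn : nat -> measure_display) (Tn : forall n, measurableType (dn n))
  (Pn : forall n, probability (Tn n) R)
  (In : forall n, int -> Tn n -> R) :
  is_process I ->
  (forall n, is_process (In n)) ->
  (forall n t w, In n t w = 0 \/ In n t w = 1) ->
  (forall n, stationary (Pn n) (In n)) ->
  (forall n, (0%E < Pn n [set w | In n 0%R w = 1%R])%E) ->
  (forall u v : nat, (0 < u)%N -> (0 < v)%N ->
     forall f : 'rV[R]_(u + v).+1 -> R, bounded_continuous f ->
     (fun n => cond_expect (Pn n) [set w | In n 0 w = 1]
                  (f \o window (In n) u v)) @ \oo
       --> Rintegral P setT (f \o window I u v)) ->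
  forall A : set int, 0 \in A ->
  forall a, a \in A ->
    P (\bigcap_(t in A) (I t @^-1` [set 1])) =
    P (\bigcap_(t in A) (I (t - a) @^-1` [set 1])).
Proof.
move=> mI mIn In01 In_stationary _ cvg_window A A0 a aA.
have s0A : {subset [:: 0; a] <= A} by move=> t; rewrite mem_seq2 => /orP[] /eqP ->.
apply: (probability_bigcap_eq s0A) => [t | t | s s0s _].
- exact: preimage1_measurable.
- exact: (preimage1_measurable (t - a) mI).
rewrite -[\bigcap_(t in _) (I (t - a) @^-1` _)]/(ones_event (fun t => I (t - a)) s) ones_event_shift.
apply/esym/(probability_ones_event_shift mI mIn In01 In_stationary cvg_window).
- by apply: s0s; rewrite inE eqxx.
- by apply: s0s; rewrite !inE eqxx orbT.
Qed.
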